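(* Let $d\ge 1$, $\ell\in\{1,\dots,d\}$, and $\mu,\theta,\eta,k>0$. Consider a continuous-time Markov chain $(X(t),Z_1(t),Z_2(t))_{t\ge0}$ on $\mathbb{Z}_{\ge0}^d\times\mathbb{Z}_{\ge0}\times\mathbb{Z}_{\ge0}$, $X=(X_1,\dots,X_d)$, describing a stochastic reaction network on species $\mathbf{X}_1,\dots,\mathbf{X}_d$ (with arbitrary reactions whose stoichiometries involve only the species $\mathbf{X}_1,\dots,\mathbf{X}_d$ and whose propensities depend only on $X$) interconnected with the antithetic integral controller consisting of the reactions $$\emptyset\xrightarrow{\ \mu\ }\mathbf{Z}_1,\qquad \emptyset\xrightarrow{\ \theta X_\ell\ }\mathbf{Z}_2,\qquad \mathbf{Z}_1+\mathbf{Z}_2\xrightarrow{\ \eta Z_1Z_2\ }\emptyset,\qquad \emptyset\xrightarrow{\ kZ_1\ }\mathbf{X}_1,$$ and possibly additionally a feedback reaction $\emptyset\xrightarrow{F(X_\ell)}\mathbf{X}_1$ with a nonnegative propensity function $F$ (the labels over the arrows denote the propensities). Let $\mathcal{A}$ denote the generator of this chain and let $\pi$ be a stationary distribution of the chain such that all the expectations below are finite and $\mathbb{E}_\pi[\mathcal{A}f]=0$ for each of the functions $f\in\{z_1,\,z_2,\,z_1^2,\,z_2^2,\,(z_1-z_2)^2\}$. Then, regardless of the reactions and parameters of the controlled network, $$\mathrm{Cov}_\pi(X_\ell,Z_1-Z_2)=\frac{\mu}{\theta},\qquad \mathbb{E}_\pi[Z_1Z_2]=\frac{\mu}{\eta},$$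 $$\mathbb{E}_\pi[Z_1^2Z_2]=\frac{\mu}{\eta}\bigl(1+\mathbb{E}_\pi[Z_1]\bigr),\qquad \mathbb{E}_\pi[Z_1Z_2^2]=\frac{\mu+\theta\,\mathbb{E}_\pi[X_\ell Z_2]}{\eta}.$$
   Context: A reaction with propensity $\lambda(x,z)$ and stoichiometric (jump) vector $\zeta$ makes the Markov chain jump from state $(x,z)$ to $(x,z)+\zeta$ at rate $\lambda(x,z)$; the generator acts on functions $f$ by $(\mathcal{A}f)(x,z)=\sum_{\text{reactions}}\lambda(x,z)\bigl(f((x,z)+\zeta)-f(x,z)\bigr)$. $\mathbb{E}_\pi$ and $\mathrm{Cov}_\pi$ denote expectation and covariance under $\pi$. The paper states these identities ''under the assumption that these invariants exist, i.e. they are finite''; the finiteness/stationary moment equation assumption above formalizes this. *)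

From HB Require Import structures.
From mathcomp Require Import all_boot all_order all_algebra.
From mathcomp Require Import all_classical all_reals.
From mathcomp Require Import topology normedtype sequences esum.
Set Implicit Arguments. Unset Strict Implicit. Unset Printing Implicit Defensive.
Import Order.TTheory GRing.Theory Num.Theory.
Local Open Scope classical_set_scope.
Local Open Scope ring_scope.

Section CRN.
Variables (R : realType) (d : nat).

(* State (x, z1, z2) with x = (X_1, ..., X_d); integer coordinates so that
   jumps are additions; the chain lives on the nonnegative orthant. *)
Definition xstate := {ffun 'I_d -> int}.
Definition state := (xstate * int * int)%type.
Definition sx (s : state) : xstate := s.1.1.
Definition sz1 (s : state) : int := s.1.2.
Definition sz2 (s : state) : int := s.2.

Definition orthant : set state :=
  [set s | (forall i, (0 <= sx s i)%R) /\ (0 <= sz1 s)%R /\ (0 <= sz2 s)%R].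

(* a reaction: (propensity, stoichiometric jump vector) *)
Definition reaction := ((state -> R) * state)%type.

Definition generator (rs : seq reaction) (f : state -> R) (s : state) : R :=
  \sum_(r <- rs) r.1 s * (f (s + r.2) - f s).

(* stationary distribution of the chain with reactions rs on the orthant:
   probability on the orthant satisfying global balance pi Q = 0 *)
Definition stationary (rs : seq reaction) (pi : state -> R) : Prop :=
  [/\ (forall s, 0 <= pi s),
      (forall s, ~ orthant s -> pi s = 0),
      (\esum_(s in orthant) (pi s)%:E = 1)%E &
      forall s, orthant s ->
        (\esum_(s' in orthant)
            (pi s' * \sum_(r <- rs | (r.2 != 0) && (s' + r.2 == s)) r.1 s')%:E
         = (pi s * \sum_(r <- rs | r.2 != 0) r.1 s)%:E)%E].

Definition finite_exp (pi : state -> R) (g : state -> R) : Prop :=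
  summable orthant (fun s => (pi s * g s)%:E).

Definition Epi (pi : state -> R) (g : state -> R) : R :=
  fine (\esum_(s in orthant) (Num.max (pi s * g s) 0)%:E)
  - fine (\esum_(s in orthant) (Num.max (- (pi s * g s)) 0)%:E).

Definition Covpi (pi : state -> R) (f g : state -> R) : R :=
  Epi pi (fun s => f s * g s) - Epi pi f * Epi pi g.

Definition e1 (hd : (0 < d)%N) : xstate :=
  [ffun i => if i == Ordinal hd then 1 else 0].

Definition controlled_reactions (hd : (0 < d)%N) (l : 'I_d)
    (net : seq ((xstate -> R) * xstate)) (mu theta eta k : R) (F : int -> R)
    : seq reaction :=
  [seq ((fun s => r.1 (sx s)), (r.2, 0, 0)) | r <- net] ++
  [:: ((fun _ => mu), (0, 1, 0));
      ((fun s => theta * (sx s l)%:~R), (0, 0, 1));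
      ((fun s => eta * (sz1 s)%:~R * (sz2 s)%:~R), (0, -1, -1));
      ((fun s => k * (sz1 s)%:~R), (e1 hd, 0, 0));
      ((fun s => F (sx s l)), (e1 hd, 0, 0))].

End CRN.

From HB Require Import structures.
From mathcomp Require Import all_boot all_order all_algebra.
From mathcomp Require Import all_classical all_reals.
From mathcomp Require Import topology normedtype sequences esum.
From mathcomp Require Import ereal ring lra.
Import Order.TTheory GRing.Theory Num.Theory.

(* Only the three controller reactions change z: the network reactions and the
   actuation reactions k Z1 and F(X_l) leave (z1, z2) untouched.  Hence for a
   polynomial f(z1, z2) the generator A f is a polynomial in x_l, z1, z2 whose
   coefficients involve mu, theta and eta alone, and E_pi[A f] = 0 is a linear
   relation between finitely many moments of pi, whatever the controlled
   network is.  The relations for f = z1, z2, z1^2, z2^2 and (z1 - z2)^2 are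
   solved for the four identities.  The only analytic input is that E_pi, the
   difference of the sums of the positive and negative parts of pi g, is
   linear on pi-summable functions. *)

Set Implicit Arguments.
Unset Strict Implicit.
Local Open Scope ring_scope.

Lemma max0_subN (R : realDomainType) (x : R) : Num.max x 0 - Num.max (- x) 0 = x.
Proof. by case: (ger0P x) => x0; case: (ger0P (- x)) => Nx0; lra. Qed.

Lemma max0_ge0 (R : realDomainType) (x : R) : 0 <= Num.max x 0.
Proof. by rewrite le_max lexx orbT. Qed.

Section RealSum.
Variables (R : realType) (T : choiceType) (D : set T).
Implicit Types (u v a b : T -> R).

Lemma ge0_esumZl (c : R) (a : T -> \bar R) : 0 <= c -> (forall s, 0 <= a s)%E ->
  (\esum_(s in D) (c%:E * a s) = c%:E * \esum_(s in D) a s)%E.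
Proof.
move=> c0 a0; rewrite /esum -ereal_supZl //; last first.
  by apply/set0P; exists 0%E; exists set0; [exact: fsets_set0 | rewrite fsbig_set0].
congr ereal_sup; apply/seteqP; split => x /=.
  by case=> A DA <-; exists (\sum_(i \in A) a i)%E; [exists A | rewrite ge0_mule_fsumr].
by case=> y [A DA <-] <-; exists A => //; rewrite ge0_mule_fsumr.
Qed.

Lemma fine_ge0_mulEFin (c : R) (x : \bar R) : 0 <= c -> (0 <= x)%E ->
  fine (c%:E * x) = c * fine x.
Proof.
case: x => [r | | //] c0 _ /=; first by [].
have [-> | c_gt0] := eqVneq c 0; first by rewrite mul0e mul0r.
by rewrite gt0_muley ?lte_fin ?lt0r ?c_gt0 // mulr0.
Qed.

Lemma le_summable a b : (forall s, D s -> `|a s| <= `|b s|) ->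
  summable D (fun s => (b s)%:E) -> summable D (fun s => (a s)%:E).
Proof.
move=> ab; apply: le_lt_trans; apply: le_esum => s Ds.
by rewrite !abse_EFin lee_fin ab.
Qed.

Lemma summable_realD u v :
  summable D (fun s => (u s)%:E) -> summable D (fun s => (v s)%:E) ->
  summable D (fun s => (u s + v s)%:E).
Proof.
move=> su sv; apply: le_lt_trans (summableD su sv).
by apply: le_esum => s _; rewrite EFinD.
Qed.

Lemma summable_realZ (c : R) u : summable D (fun s => (u s)%:E) ->
  summable D (fun s => (c * u s)%:E).
Proof.
rewrite /summable => su.
under eq_esum do rewrite abse_EFin normrM EFinM -abse_EFin.
by rewrite ge0_esumZl ?lte_mul_pinfty // => s; exact: abse_ge0.
Qed.

Lemma summable_max0 u : summable D (fun s => (u s)%:E) ->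
  summable D (fun s => (Num.max (u s) 0)%:E).
Proof.
apply: le_summable => s _.
by rewrite ger0_norm ?max0_ge0 // ge_max ler_norm normr_ge0.
Qed.

Lemma summable_realN u : summable D (fun s => (u s)%:E) ->
  summable D (fun s => (- u s)%:E).
Proof. by apply: le_summable => s _; rewrite normrN. Qed.

Lemma ge0_summable_fin_num a : (forall s, 0 <= a s) ->
  summable D (fun s => (a s)%:E) -> \esum_(s in D) (a s)%:E \is a fin_num.
Proof.
by move=> a0; rewrite summableE; under eq_esum => s _ do rewrite abse_EFin ger0_norm //.
Qed.

(* Meaningful for absolutely summable u only: an infinite sum contributes
   [fine +oo = 0]. *)
Definition rsum u : R :=
  fine (\esum_(s in D) (Num.max (u s) 0)%:E)
  - fine (\esum_(s in D) (Num.max (- u s) 0)%:E).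

Lemma rsum_diff u a b : (forall s, 0 <= a s) -> (forall s, 0 <= b s) ->
  summable D (fun s => (a s)%:E) -> summable D (fun s => (b s)%:E) ->
  (forall s, D s -> u s = a s - b s) ->
  rsum u = fine (\esum_(s in D) (a s)%:E) - fine (\esum_(s in D) (b s)%:E).
Proof.
move=> a0 b0 sa sb uE.
have fin_pos : \esum_(s in D) (Num.max (u s) 0)%:E \is a fin_num.
  apply: ge0_summable_fin_num (le_summable _ sa) => [s | s Ds]; first exact: max0_ge0.
  by rewrite !ger0_norm ?max0_ge0 // ge_max a0 uE // andbT; have := b0 s; lra.
have fin_neg : \esum_(s in D) (Num.max (- u s) 0)%:E \is a fin_num.
  apply: ge0_summable_fin_num (le_summable _ sb) => [s | s Ds]; first exact: max0_ge0.
  by rewrite !ger0_norm ?max0_ge0 // ge_max b0 uE // andbT; have := a0 s; lra.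
have balance : (\esum_(s in D) ((Num.max (u s) 0)%:E + (b s)%:E)
               = \esum_(s in D) ((Num.max (- u s) 0)%:E + (a s)%:E))%E.
  apply: eq_esum => s Ds; rewrite -!EFinD; congr EFin.
  by have := max0_subN (u s); rewrite uE //; lra.
rewrite !esumD in balance => //; try by move=> s _; rewrite lee_fin ?max0_ge0.
move/(congr1 fine): balance.
by rewrite !fineD ?fin_pos ?fin_neg ?ge0_summable_fin_num // /rsum; lra.
Qed.

Lemma rsumD u v : summable D (fun s => (u s)%:E) -> summable D (fun s => (v s)%:E) ->
  rsum (fun s => u s + v s) = rsum u + rsum v.
Proof.
move=> su sv; have [sNu sNv] := (summable_realN su, summable_realN sv).
have max0_fin (w : T -> R) : summable D (fun s => (w s)%:E) ->
    \esum_(s in D) (Num.max (w s) 0)%:E \is a fin_num.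
  by move=> sw; apply: ge0_summable_fin_num _ (summable_max0 sw) => s; exact: max0_ge0.
rewrite (@rsum_diff _ (fun s => Num.max (u s) 0 + Num.max (v s) 0)
                      (fun s => Num.max (- u s) 0 + Num.max (- v s) 0)).
- under eq_esum do rewrite EFinD; under [X in _ - fine X]eq_esum do rewrite EFinD.
  rewrite !esumD ?fineD ?max0_fin //; try by move=> s _; rewrite lee_fin max0_ge0.
  by rewrite /rsum; lra.
- by move=> s; apply: addr_ge0; apply: max0_ge0.
- by move=> s; apply: addr_ge0; apply: max0_ge0.
- by apply: summable_realD; apply: summable_max0.
- by apply: summable_realD; apply: summable_max0.
- by move=> s _; have := max0_subN (u s); have := max0_subN (v s); lra.
Qed.

Lemma rsumN u : rsum (fun s => - u s) = - rsum u.
Proof.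
rewrite /rsum opprB; congr (_ - _); congr fine.
by apply: eq_esum => s _; rewrite opprK.
Qed.

Lemma rsumZ (c : R) u : rsum (fun s => c * u s) = c * rsum u.
Proof.
wlog c0 : c u / 0 <= c => [hwlog | ].
  have [|c_lt0] := lerP 0 c; first exact: hwlog.
  have -> : (fun s => c * u s) = (fun s => - ((- c) * u s)).
    by apply/funext => s; rewrite mulNr opprK.
  by rewrite rsumN hwlog ?oppr_ge0 ?ltW // mulNr opprK.
have scale w : fine (\esum_(s in D) (Num.max (c * w s) 0)%:E)
             = c * fine (\esum_(s in D) (Num.max (w s) 0)%:E).
  under eq_esum do rewrite -(mulr0 c) -maxr_pMr // EFinM.
  rewrite ge0_esumZl ?fine_ge0_mulEFin //; last by move=> s; rewrite lee_fin max0_ge0.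
  by apply: esum_ge0 => s _; rewrite lee_fin max0_ge0.
rewrite /rsum scale; under [X in _ - fine X]eq_esum do rewrite -mulrN.
by rewrite scale mulrBr.
Qed.

Lemma rsum0 : rsum (fun=> 0) = 0.
Proof. by rewrite /rsum oppr0 maxxx esum1 ?subrr. Qed.

Section LinearCombination.
Variables (I : eqType) (c : I -> R) (u : I -> T -> R).

Lemma summable_lincomb (r : seq I) :
  (forall i, i \in r -> summable D (fun s => (u i s)%:E)) ->
  summable D (fun s => (\sum_(i <- r) c i * u i s)%:E).
Proof.
elim: r => [_ | i r IH ur].
  by rewrite /summable esum1 // => s _; rewrite big_nil abse0.
have -> : (fun s => (\sum_(j <- i :: r) c j * u j s)%:E)
        = (fun s => (c i * u i s + \sum_(j <- r) c j * u j s)%:E).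
  by apply/funext => s; rewrite big_cons.
apply: summable_realD; first by apply/summable_realZ/ur; rewrite mem_head.
by apply: IH => j jr; apply: ur; rewrite in_cons jr orbT.
Qed.

Lemma rsum_lincomb (r : seq I) :
  (forall i, i \in r -> summable D (fun s => (u i s)%:E)) ->
  rsum (fun s => \sum_(i <- r) c i * u i s) = \sum_(i <- r) c i * rsum (u i).
Proof.
elim: r => [_ | i r IH ur].
  have -> : (fun s => \sum_(i <- [::]) c i * u i s) = (fun=> 0).
    by apply/funext => s; rewrite big_nil.
  by rewrite rsum0 big_nil.
have ur' : forall j, j \in r -> summable D (fun s => (u j s)%:E).
  by move=> j jr; apply: ur; rewrite in_cons jr orbT.
have -> : (fun s => \sum_(j <- i :: r) c j * u j s)
        = (fun s => c i * u i s + \sum_(j <- r) c j * u j s).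
  by apply/funext => s; rewrite big_cons.
rewrite rsumD ?rsumZ ?IH ?big_cons //; last exact: summable_lincomb.
by apply/summable_realZ/ur; rewrite mem_head.
Qed.

End LinearCombination.

End RealSum.

Section StationaryMoments.
Variables (R : realType) (d : nat) (pi : state d -> R).

Lemma EpiE g : Epi pi g = rsum (@orthant d) (fun s => pi s * g s).
Proof. by []. Qed.

Lemma Epi_lincomb (I : eqType) (r : seq I) (c : I -> R) (g : I -> state d -> R)
    (h : state d -> R) :
  (forall i, i \in r -> finite_exp pi (g i)) ->
  (forall s, h s = \sum_(i <- r) c i * g i s) ->
  Epi pi h = \sum_(i <- r) c i * Epi pi (g i).
Proof.
move=> gfin hE; rewrite EpiE.
have -> : (fun s => pi s * h s) = (fun s => \sum_(i <- r) c i * (pi s * g i s)).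
  by apply/funext => s; rewrite hE mulr_sumr; apply: eq_bigr => i _; rewrite mulrCA.
exact: rsum_lincomb.
Qed.

Lemma EpiB g h : finite_exp pi g -> finite_exp pi h ->
  Epi pi (fun s => g s - h s) = Epi pi g - Epi pi h.
Proof.
move=> gfin hfin.
rewrite (@Epi_lincomb _ [:: true; false] (fun b => if b then 1 else -1)
                      (fun b => if b then g else h)).
- by rewrite !big_cons big_nil /= mul1r mulN1r addr0.
- by case.
- by move=> s; rewrite !big_cons big_nil /= mul1r mulN1r addr0.
Qed.

Section Stationary.
Variable rs : seq (reaction R d).
Hypothesis pi_stationary : stationary rs pi.

Lemma stationary_finite_exp1 : finite_exp pi (fun=> 1).
Proof.
case: pi_stationary => pi_ge0 _ pi1 _; rewrite /finite_exp /summable.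
under eq_esum do rewrite mulr1 abse_EFin (ger0_norm (pi_ge0 _)).
by rewrite pi1 ltry.
Qed.

Lemma stationary_Epi1 : Epi pi (fun=> 1) = 1.
Proof.
case: pi_stationary => pi_ge0 _ pi1 _; rewrite EpiE /rsum.
under eq_esum do rewrite mulr1 (max_l (pi_ge0 _)).
by rewrite pi1 esum1 ?subr0 // => s _; rewrite mulr1 max_r // oppr_le0.
Qed.

End Stationary.

End StationaryMoments.

Section AntitheticController.
Variables (R : realType) (d : nat) (hd : (0 < d)%N) (l : 'I_d).
Variables (mu theta eta k : R) (net : seq ((xstate d -> R) * xstate d)) (F : int -> R).

Local Notation rs := (controlled_reactions hd l net mu theta eta k F).

Definition Xl (s : state d) : R := (sx s l)%:~R.
Definition Z1 (s : state d) : R := (sz1 s)%:~R.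
Definition Z2 (s : state d) : R := (sz2 s)%:~R.

Lemma generator_z (G : R -> R -> R) (s : state d) :
  generator rs (fun s => G (Z1 s) (Z2 s)) s =
    mu * (G (Z1 s + 1) (Z2 s) - G (Z1 s) (Z2 s))
  + theta * Xl s * (G (Z1 s) (Z2 s + 1) - G (Z1 s) (Z2 s))
  + eta * (Z1 s * Z2 s) * (G (Z1 s - 1) (Z2 s - 1) - G (Z1 s) (Z2 s)).
Proof.
rewrite /generator /controlled_reactions big_cat big_map /= !big_cons big_nil /=.
rewrite big1 => [|r _]; last by rewrite /Z1 /Z2 /sz1 /sz2 /= !addr0 subrr mulr0.
rewrite /Z1 /Z2 /Xl /sz1 /sz2 /= !addr0 !subrr !mulr0 !addr0 !add0r !intrD.
by rewrite ?rmorphN ?rmorph1 ?mulrN1z addrA mulrA.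
Qed.

Section Moments.
Variable pi : state d -> R.
Local Notation moments := [:: Xl; Z1; Z2; (fun s => Xl s * Z1 s); (fun s => Xl s * Z2 s);
  (fun s => Z1 s * Z2 s); (fun s => Z1 s ^+ 2 * Z2 s); (fun s => Z1 s * Z2 s ^+ 2)].

Hypothesis pi_stationary : stationary rs pi.
Hypothesis moments_finite : forall g, g \in moments -> finite_exp pi g.
Hypothesis generator_Epi0 : forall f,
  f \in [:: Z1; Z2; (fun s => Z1 s ^+ 2); (fun s => Z2 s ^+ 2);
            (fun s => (Z1 s - Z2 s) ^+ 2)] ->
  Epi pi (generator rs f) = 0.

Let Epi_generator f (L : seq (R * (state d -> R))) :
  all (fun cg => cg.2 \in (fun=> 1) :: moments) L ->
  (forall s, generator rs f s = \sum_(cg <- L) cg.1 * cg.2 s) ->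
  Epi pi (generator rs f) = \sum_(cg <- L) cg.1 * Epi pi cg.2.
Proof.
move=> /allP Lfin; apply: (Epi_lincomb (c := fst) (g := snd)) => cg /Lfin.
rewrite inE => /predU1P[-> | /moments_finite //].
exact: stationary_finite_exp1 pi_stationary.
Qed.

Let Epi1 := stationary_Epi1 pi_stationary.

Lemma moment_eq_z1 : mu = eta * Epi pi (fun s => Z1 s * Z2 s).
Proof.
have := @generator_Epi0 Z1; rewrite !inE eqxx ?orbT => /(_ isT).
rewrite (Epi_generator (L := [:: (mu, fun=> 1); (- eta, fun s => Z1 s * Z2 s)])).
- by rewrite !big_cons big_nil /= Epi1; lra.
- by rewrite /= !inE !eqxx ?orbT.
- by move=> s; rewrite (generator_z (fun z1 _ => z1)) !big_cons big_nil /=; ring.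
Qed.

Lemma moment_eq_z2 : theta * Epi pi Xl = eta * Epi pi (fun s => Z1 s * Z2 s).
Proof.
have := @generator_Epi0 Z2; rewrite !inE eqxx ?orbT => /(_ isT).
rewrite (Epi_generator (L := [:: (theta, Xl); (- eta, fun s => Z1 s * Z2 s)])).
- by rewrite !big_cons big_nil /=; lra.
- by rewrite /= !inE !eqxx ?orbT.
- by move=> s; rewrite (generator_z (fun _ z2 => z2)) !big_cons big_nil /=; ring.
Qed.

Lemma moment_eq_z1sq : 2 * eta * Epi pi (fun s => Z1 s ^+ 2 * Z2 s)
  = mu * (1 + 2 * Epi pi Z1) + eta * Epi pi (fun s => Z1 s * Z2 s).
Proof.
have := @generator_Epi0 (fun s => Z1 s ^+ 2); rewrite !inE eqxx ?orbT => /(_ isT).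
rewrite (Epi_generator (L := [:: (mu, fun=> 1); (2 * mu, Z1); (eta, fun s => Z1 s * Z2 s);
                                (- (2 * eta), fun s => Z1 s ^+ 2 * Z2 s)])).
- by rewrite !big_cons big_nil /= Epi1; lra.
- by rewrite /= !inE !eqxx ?orbT.
- by move=> s; rewrite (generator_z (fun z1 _ => z1 ^+ 2)) !big_cons big_nil /=; ring.
Qed.

Lemma moment_eq_z2sq : 2 * eta * Epi pi (fun s => Z1 s * Z2 s ^+ 2)
  = theta * (Epi pi Xl + 2 * Epi pi (fun s => Xl s * Z2 s))
    + eta * Epi pi (fun s => Z1 s * Z2 s).
Proof.
have := @generator_Epi0 (fun s => Z2 s ^+ 2); rewrite !inE eqxx ?orbT => /(_ isT).
rewrite (Epi_generator (L := [:: (theta, Xl); (2 * theta, fun s => Xl s * Z2 s);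
                                (eta, fun s => Z1 s * Z2 s);
                                (- (2 * eta), fun s => Z1 s * Z2 s ^+ 2)])).
- by rewrite !big_cons big_nil /=; lra.
- by rewrite /= !inE !eqxx ?orbT.
- by move=> s; rewrite (generator_z (fun _ z2 => z2 ^+ 2)) !big_cons big_nil /=; ring.
Qed.

Lemma moment_eq_z1subz2sq :
  2 * theta * (Epi pi (fun s => Xl s * Z1 s) - Epi pi (fun s => Xl s * Z2 s))
  = mu * (1 + 2 * (Epi pi Z1 - Epi pi Z2)) + theta * Epi pi Xl.
Proof.
have := @generator_Epi0 (fun s => (Z1 s - Z2 s) ^+ 2); rewrite !inE eqxx ?orbT => /(_ isT).
rewrite (Epi_generator (L := [:: (mu, fun=> 1); (2 * mu, Z1); (- (2 * mu), Z2); (theta, Xl);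
                                (- (2 * theta), fun s => Xl s * Z1 s);
                                (2 * theta, fun s => Xl s * Z2 s)])).
- by rewrite !big_cons big_nil /= Epi1; lra.
- by rewrite /= !inE !eqxx ?orbT.
- move=> s; rewrite (generator_z (fun z1 z2 => (z1 - z2) ^+ 2)).
  by rewrite !big_cons big_nil /=; ring.
Qed.

Hypotheses (theta_neq0 : theta != 0) (eta_neq0 : eta != 0).

Lemma Epi_Z1Z2 : Epi pi (fun s => Z1 s * Z2 s) = mu / eta.
Proof. by rewrite moment_eq_z1; field. Qed.

Lemma Epi_Xl : Epi pi Xl = mu / theta.
Proof. by rewrite moment_eq_z1 -moment_eq_z2; field. Qed.

Lemma Epi_Z1sqZ2 : Epi pi (fun s => Z1 s ^+ 2 * Z2 s) = mu / eta * (1 + Epi pi Z1).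
Proof.
have two_eta_neq0 : 2 * eta != 0 by rewrite mulf_neq0 ?pnatr_eq0.
by apply: (mulfI two_eta_neq0); rewrite moment_eq_z1sq Epi_Z1Z2; field.
Qed.

Lemma Epi_Z1Z2sq :
  Epi pi (fun s => Z1 s * Z2 s ^+ 2) = (mu + theta * Epi pi (fun s => Xl s * Z2 s)) / eta.
Proof.
have two_eta_neq0 : 2 * eta != 0 by rewrite mulf_neq0 ?pnatr_eq0.
by apply: (mulfI two_eta_neq0); rewrite moment_eq_z2sq Epi_Z1Z2 Epi_Xl; field; apply/andP.
Qed.

Lemma Covpi_Xl_Z1subZ2 : Covpi pi Xl (fun s => Z1 s - Z2 s) = mu / theta.
Proof.
have two_theta_neq0 : 2 * theta != 0 by rewrite mulf_neq0 ?pnatr_eq0.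
rewrite /Covpi.
have -> : (fun s => Xl s * (Z1 s - Z2 s)) = (fun s => Xl s * Z1 s - Xl s * Z2 s).
  by apply/funext => s; rewrite mulrBr.
rewrite !EpiB; try by apply: moments_finite; rewrite !inE eqxx ?orbT.
apply: (mulfI two_theta_neq0); rewrite Epi_Xl mulrBr moment_eq_z1subz2sq Epi_Xl.
by field.
Qed.

End Moments.

End AntitheticController.

Theorem mainTheorem1 (R : realType) (d : nat) (hd : (0 < d)%N) (l : 'I_d)
  (mu theta eta k : R) (net : seq ((xstate d -> R) * xstate d)) (F : int -> R)
  (pi : state d -> R) :
  0 < mu -> 0 < theta -> 0 < eta -> 0 < k ->
  (forall r, r \in net -> forall x : xstate d, (forall i, 0 <= x i) -> 0 <= r.1 x) ->
  (forall n : int, 0 <= n -> 0 <= F n) ->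
  let rs := controlled_reactions hd l net mu theta eta k F in
  let X := fun s : state d => ((sx s l)%:~R : R) in
  let Z1 := fun s : state d => ((sz1 s)%:~R : R) in
  let Z2 := fun s : state d => ((sz2 s)%:~R : R) in
  let fs := [:: Z1; Z2; (fun s => Z1 s ^+ 2); (fun s => Z2 s ^+ 2);
                (fun s => (Z1 s - Z2 s) ^+ 2)] in
  stationary rs pi ->
  (forall g, g \in [:: X; Z1; Z2; (fun s => X s * Z1 s); (fun s => X s * Z2 s);
                       (fun s => Z1 s * Z2 s); (fun s => Z1 s ^+ 2 * Z2 s);
                       (fun s => Z1 s * Z2 s ^+ 2)] -> finite_exp pi g) ->
  (forall f, f \in fs -> finite_exp pi (generator rs f)) ->
  (forall f, f \in fs -> Epi pi (generator rs f) = 0) ->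
  [/\ Covpi pi X (fun s => Z1 s - Z2 s) = mu / theta,
      Epi pi (fun s => Z1 s * Z2 s) = mu / eta,
      Epi pi (fun s => Z1 s ^+ 2 * Z2 s) = mu / eta * (1 + Epi pi Z1) &
      Epi pi (fun s => Z1 s * Z2 s ^+ 2) = (mu + theta * Epi pi (fun s => X s * Z2 s)) / eta].
Proof.
move=> _ theta_gt0 eta_gt0 _ _ _ ? ? ? ? ? pi_stationary moments_finite _ generator_Epi0.
have theta_neq0 := lt0r_neq0 theta_gt0; have eta_neq0 := lt0r_neq0 eta_gt0.
split.
- exact: Covpi_Xl_Z1subZ2 pi_stationary moments_finite generator_Epi0 theta_neq0.
- exact: Epi_Z1Z2 pi_stationary moments_finite generator_Epi0 eta_neq0.
- exact: Epi_Z1sqZ2 pi_stationary moments_finite generator_Epi0 eta_neq0.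
- exact: Epi_Z1Z2sq pi_stationary moments_finite generator_Epi0 theta_neq0 eta_neq0.
Qed.
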